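(* Let $A\subset\mathbf{Z}_{\geq 0}$ be finite with $0\in A$, $N=\#A\geq 2$, $A(x)=\sum_{a\in A}x^a$, and suppose $A(x)$ satisfies (T1) and (T2). Let $B$ be the set of all real numbers of the form $\sum_{s\in S_A}\frac{k_s}{s}$, where for each $s=p^\beta\in S_A$ ($p$ prime) the integer $k_s$ ranges over $\{0,1,\dots,p-1\}$. Then $\#B=N$ and $A(e^{2\pi i(b-b')})=0$ for all $b,b'\in B$ with $b\neq b'$.
   Context: $\Phi_s(x)$ denotes the $s$-th cyclotomic polynomial. $S_A$ is the set of prime powers $s$ such that $\Phi_s(x)$ divides $A(x)$. Condition (T1): $A(1)=\prod_{s\in S_A}\Phi_s(1)$. Condition (T2): if $s_1,\dots,s_k\in S_A$ are powers of pairwise distinct primes, then $\Phi_{s_1\cdots s_k}(x)$ divides $A(x)$. *)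

From HB Require Import structures.
From mathcomp Require Import all_boot all_order all_algebra all_field.
From mathcomp Require Import reals trigo.
From mathcomp Require Import complex.
Set Implicit Arguments. Unset Strict Implicit. Unset Printing Implicit Defensive.
Import Order.TTheory GRing.Theory Num.Theory.
Local Open Scope ring_scope.

Definition prime_power (s : nat) : Prop :=
  exists p beta : nat, [/\ prime p, (0 < beta)%N & s = (p ^ beta)%N].

Definition polyA (A : seq nat) : {poly int} := \sum_(a <- A) 'X^a.

Definition expi (R : realType) (theta : R) : R[i] :=
  Complex (cos theta) (sin theta).

Definition inB (R : realType) (SA : seq nat) (b : R) : Prop :=
  exists k : nat -> nat,
    (forall s, s \in SA -> (k s < pdiv s)%N) /\
    b = \sum_(s <- SA) (k s)%:R / s%:R.

From HB Require Import structures.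
From mathcomp Require Import all_boot all_order all_algebra all_field.
From mathcomp Require Import reals trigo.
From mathcomp Require Import complex.
From mathcomp Require Import ring lra zify.
Set Implicit Arguments. Unset Strict Implicit. Unset Printing Implicit Defensive.
Import Order.TTheory GRing.Theory Num.Theory.
Local Open Scope ring_scope.

(* A digit vector (k_s) determines b = sum_s k_s / s, and there are
   prod_s p_s = prod_s Phi_s(1) = A(1) = #A of them by (T1).  For two digit vectors,
   b - b' = sum_s (k_s - k'_s) / s with |k_s - k'_s| < p_s.  Adding these fractions one
   at a time keeps the sum in lowest terms C / M with M = prod_p p^(g p): for each prime
   the highest power s = p^beta with k_s <> k'_s survives in the denominator.  Hence
   M = prod_(s in T) s for a set T of powers of distinct primes in S_A, nonempty when
   the vectors differ (which gives #B = #A).  Then e^(2 pi i (b - b')) is a primitive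
   M-th root of unity, a root of Phi_M, which divides A by (T2). *)

Lemma prim_root_of_dvd (F : nzRingType) n (z : F) : (0 < n)%N ->
  (forall j, (z ^+ j == 1) = (n %| j)%N) -> n.-primitive_root z.
Proof.
move=> n_gt0 zj1; have zn1 : z ^+ n = 1 by apply/eqP; rewrite zj1.
have [m prim_m m_dvd_n] := prim_order_exists n_gt0 zn1.
suff -> : n = m by [].
by apply/eqP; rewrite eqn_dvd m_dvd_n andbT -zj1 (prim_expr_order prim_m).
Qed.

Section ComplexExponential.
Variable R : realType.

Lemma expiD (x y : R) : expi (x + y) = expi x * expi y.
Proof. by rewrite /expi cosD sinD; congr Complex; rewrite addrC. Qed.

Lemma expiMn (x : R) n : expi x ^+ n = expi (x *+ n).
Proof.
elim: n => [|n IHn]; first by rewrite /expi mulr0n cos0 sin0.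
by rewrite exprS IHn mulrS expiD.
Qed.

Lemma expi_2pi_int (n : int) : expi (2 * pi * n%:~R) = 1 :> R[i].
Proof.
have expi_2pi_nat k : expi (2 * pi * k%:R) = 1 :> R[i].
  by rewrite mulr_natr mulr_natl -expiMn /expi cos2pi sin2pi expr1n.
case: n => k; first exact: expi_2pi_nat.
rewrite NegzE intrN mulrN.
have := expiD (- (2 * pi * k.+1%:R)) (2 * pi * k.+1%:R).
by rewrite addNr expi_2pi_nat mulr1 /expi cos0 sin0.
Qed.

Lemma cos_2pi_eq1 (r : R) : 0 <= r < 1 -> cos (2 * pi * r) = 1 -> r = 0.
Proof.
case/andP=> r_ge0 r_lt1 cos_r; have pi_gt0 := @pi_gt0 R.
have [le_pi|gt_pi] := lerP (2 * pi * r) pi.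
  have : 2 * pi * r = 0 by apply: cos_inj; rewrite ?cos0 // in_itv /=; nra.
  by move/eqP; rewrite !mulf_eq0 pnatr_eq0 (gt_eqF pi_gt0) => /eqP.
have : pi *+ 2 - 2 * pi * r = 0.
  apply: cos_inj; rewrite ?cos0 ?in_itv /= ?mulr2n; try (apply/andP; split); try nra.
  by rewrite -mulr2n addrC cosD2pi cosN.
by rewrite mulr2n; nra.
Qed.

Lemma expi_2pi_eq1 (y : R) : expi (2 * pi * y) = 1 -> exists n : int, y = n%:~R.
Proof.
move=> expi_y; exists (Num.floor y).
have /andP[floor_le lt_floor] := floor_itv y.
suff : y - (Num.floor y)%:~R = 0 by move/eqP; rewrite subr_eq0 => /eqP.
apply: cos_2pi_eq1; first by rewrite subr_ge0 floor_le ltrBlDl -[1]/(1%:~R) -intrD.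
have : expi (2 * pi * (y - (Num.floor y)%:~R)) = 1.
  have := expiD (2 * pi * y - 2 * pi * (Num.floor y)%:~R) (2 * pi * (Num.floor y)%:~R).
  by rewrite subrK expi_2pi_int mulr1 expi_y mulrBr => /esym.
by case.
Qed.

Lemma expi_2pi_prim_root (m : nat) (C : int) : (0 < m)%N -> coprimez m C ->
  m.-primitive_root (expi (2 * pi * (C%:~R / m%:R)) : R[i]).
Proof.
move=> m_gt0 mC; have m_neq0 : m%:R != 0 :> R by rewrite pnatr_eq0 -lt0n.
apply: prim_root_of_dvd => // j; rewrite expiMn -mulrnAr -mulrnAr.
apply/eqP/idP => [/expi_2pi_eq1 [n Cj_n] | /dvdnP [q ->]].
  suff : (m%:Z %| C * j%:Z)%Z by rewrite Gauss_dvdzr.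
  apply/dvdzP; exists n; apply: (@intr_inj R).
  by rewrite !intrM -Cj_n -mulr_natr; field.
rewrite -(expi_2pi_int (C * q)) intrM; congr (expi (_ * _)).
by rewrite -mulr_natr natrM; field.
Qed.
End ComplexExponential.

Lemma divisors_pfactorS k p : prime p ->
  perm_eq (divisors (p ^ k.+1)) (p ^ k.+1 :: divisors (p ^ k))%N.
Proof.
move=> p_pr; have p_gt0 := prime_gt0 p_pr.
have pk_gt0 j : (0 < p ^ j)%N by rewrite expn_gt0 p_gt0.
apply: uniq_perm; rewrite /= ?divisors_uniq ?andbT //.
  by rewrite -dvdn_divisors // dvdn_Pexp2l ?prime_gt1 // ltnn.
move=> d; rewrite inE -!dvdn_divisors //.
apply/idP/idP => [|/predU1P[-> //|/dvdn_trans->//]]; last exact: dvdn_exp2l.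
case/(dvdn_pfactor _ _ p_pr) => i; rewrite leq_eqVlt ltnS => /predU1P[-> -> | i_le ->].
  by rewrite eqxx.
by rewrite dvdn_exp2l ?orbT.
Qed.

Lemma Cyclotomic_pfactor_at1 p k : prime p -> ('Phi_(p ^ k.+1)).[1] = p%:Z.
Proof.
move=> p_pr; have pk_gt0 j : (0 < p ^ j)%N by rewrite expn_gt0 prime_gt0.
set Y : {poly int} := 'X^(p ^ k) - 1.
have Y_neq0 : Y != 0 by rewrite monic_neq0 // monicXnsubC.
suff -> : 'Phi_(p ^ k.+1) = \sum_(i < p) 'X^(p ^ k) ^+ i.
  rewrite horner_sum (eq_bigr (fun=> 1)) => [|i _]; last first.
    by rewrite horner_exp hornerXn !expr1n.
  by rewrite sumr_const card_ord natz.
apply: (mulIf Y_neq0); transitivity ('X^(p ^ k.+1) - 1 : {poly int}).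
  rewrite -prod_Cyclotomic // (perm_big _ (divisors_pfactorS k p_pr)) big_cons.
  by rewrite prod_Cyclotomic.
by rewrite expnSr exprM subrX1 mulrC.
Qed.

Lemma root_map_Cyclotomic (F : fieldType) m (z : F) :
  m.-primitive_root z -> root (map_poly intr 'Phi_m) z.
Proof.
move=> prim_z; have m_gt0 := prim_order_gt0 prim_z.
have map_Xn1 n : map_poly (intr : int -> F) ('X^n - 1) = 'X^n - 1.
  by rewrite rmorphB /= rmorph1 map_polyXn.
have root_Xn1 n : root (map_poly intr ('X^n - 1)) z = (m %| n)%N.
  by rewrite map_Xn1 rootE !hornerE subr_eq0 (prim_order_dvd prim_z).
have : root (map_poly intr ('X^m - 1)) z by rewrite root_Xn1.
rewrite -prod_Cyclotomic // rmorph_prod /= rootE horner_prod prodf_seq_eq0.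
case/hasP => d d_div /= /eqP Phi_d_z; rewrite -dvdn_divisors // in d_div.
have : root (map_poly intr ('X^d - 1)) z.
  rewrite -prod_Cyclotomic ?(dvdn_gt0 m_gt0) // (big_rem d) ?divisors_id ?(dvdn_gt0 m_gt0) //.
  by rewrite rmorphM rootE hornerM /= Phi_d_z mul0r.
rewrite root_Xn1 => m_dvd_d; suff -> : m = d by rewrite rootE Phi_d_z.
by apply/eqP; rewrite eqn_dvd m_dvd_d d_div.
Qed.

Lemma coprimezMDl q m n : coprimez m (q * m + n) = coprimez m n.
Proof. by rewrite /coprimez gcdzMDl. Qed.

Lemma coprimez_prime p x : prime p -> coprimez p x = ~~ (p%:Z %| x)%Z.
Proof. by move=> p_pr; rewrite coprimezE prime_coprime. Qed.

(* Exactly one of the exponents [maxn g b - g], [maxn g b - b] vanishes, and the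
   summand where it does is the one not divisible by [p]. *)
Lemma coprimez_pfrac_add p m g b C e : prime p -> b != g -> coprime p m ->
  coprimez p e -> coprimez (p ^ g * m)%N C ->
  coprimez (p ^ maxn g b * m)%N
    (C * (p ^ (maxn g b - g))%N%:Z + e * (p ^ (maxn g b - b) * m)%N%:Z).
Proof.
move=> p_pr b_neq p_m pe; rewrite coprimezE /= coprimeMl => /andP[pgC mC].
have M_gt0 : (0 < maxn g b)%N by move: b_neq; lia.
set C' := C * _ + _; rewrite coprimezE /= coprimeMl coprime_pexpl //.
apply/andP; split; [change (coprimez p C') | change (coprimez m C')]; rewrite /C'.
  rewrite coprimez_prime //.
  have [b_lt|g_lt|/eqP] := ltngtP b g; last by rewrite (negPf b_neq).
    rewrite subnn expn0 mulr1 rpredDr -?coprimez_prime //.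
      by move: pgC; rewrite coprime_pexpl //; apply: leq_ltn_trans b_lt.
    by rewrite dvdz_mull // dvdzE dvdn_mulr // dvdn_exp // subn_gt0.
  rewrite subnn expn0 mul1n rpredDl -?coprimez_prime //.
    by rewrite coprimezMr pe.
  by rewrite dvdz_mull // dvdzE dvdn_exp // subn_gt0.
rewrite PoszM mulrA addrC coprimezMDl coprimezMr.
by apply/andP; split => //; rewrite coprimezE /= coprime_sym coprimeXl.
Qed.

Section PrimePowerFractions.
Variables (R : numFieldType) (P : seq nat).
Hypotheses (P_uniq : uniq P) (P_prime : all prime P).

Definition pfrac_den (g : nat -> nat) := (\prod_(p <- P) p ^ g p)%N.

Definition raise_exp (g : nat -> nat) p b q := if q == p then maxn (g p) b else g q.

Lemma pfrac_den_split g p : p \in P ->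
  pfrac_den g = (p ^ g p * \prod_(q <- P | q != p) q ^ g q)%N.
Proof. by move=> pP; rewrite /pfrac_den (bigD1_seq p pP P_uniq). Qed.

Lemma pfrac_den_prod_gt0 (Q : pred nat) g : (0 < \prod_(q <- P | Q q) q ^ g q)%N.
Proof.
rewrite big_seq_cond prodn_cond_gt0 // => q /andP[qP _].
by rewrite expn_gt0 prime_gt0 //; apply: (allP P_prime).
Qed.

Lemma pfrac_den_gt1 g p : p \in P -> (0 < g p)%N -> (1 < pfrac_den g)%N.
Proof.
move=> pP gp_gt0; rewrite (pfrac_den_split _ pP).
apply: (leq_trans _ (leq_pmulr _ (pfrac_den_prod_gt0 _ _))).
by rewrite -{1}(expn0 p) ltn_exp2l // prime_gt1 //; apply: (allP P_prime).
Qed.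

Lemma pfrac_add g C p b e : p \in P -> b != g p ->
  coprimez p e -> coprimez (pfrac_den g) C ->
  exists2 C', coprimez (pfrac_den (raise_exp g p b)) C' &
    C%:~R / (pfrac_den g)%:R + e%:~R / (p ^ b)%:R
      = C'%:~R / (pfrac_den (raise_exp g p b))%:R :> R.
Proof.
move=> pP b_neq pe gC; have p_pr : prime p := allP P_prime p pP.
set m0 := (\prod_(q <- P | q != p) q ^ g q)%N.
set M := maxn (g p) b.
have den_g' : pfrac_den (raise_exp g p b) = (p ^ M * m0)%N.
  rewrite (pfrac_den_split _ pP) /raise_exp eqxx; congr (_ * _)%N.
  by apply: eq_bigr => q /negbTE ->.
have p_m0 : coprime p m0.
  rewrite /m0 big_seq_cond; elim/big_ind: _ => [|x y|q /andP[qP qp]].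
  - exact: coprimen1.
  - by rewrite coprimeMr => ->.
  apply: coprimeXr; rewrite prime_coprime // dvdn_prime2 //; last exact: (allP P_prime).
  by rewrite eq_sym.
have m0_gt0 : (0 < m0)%N := pfrac_den_prod_gt0 _ _.
exists (C * (p ^ (M - g p))%N%:Z + e * (p ^ (M - b) * m0)%N%:Z).
  by rewrite den_g'; apply: coprimez_pfrac_add; rewrite -?(pfrac_den_split _ pP).
have pX_neq0 j : (p ^ j)%:R != 0 :> R by rewrite pnatr_eq0 -lt0n expn_gt0 prime_gt0.
have m0_neq0 : m0%:R != 0 :> R by rewrite pnatr_eq0 -lt0n.
have split_pM j : (j <= M)%N -> (p ^ M)%:R = (p ^ j)%:R * (p ^ (M - j))%:R :> R.
  by move=> jM; rewrite -natrM -expnD subnKC.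
rewrite den_g' (pfrac_den_split _ pP) -/m0 intrD !intrM !natrM mulrDl; congr (_ + _).
  by rewrite (split_pM (g p)) ?leq_maxl //; field; rewrite m0_neq0 !pX_neq0.
by rewrite (split_pM b) ?leq_maxr //; field; rewrite m0_neq0 !pX_neq0.
Qed.

Lemma pfrac_sum (S : seq nat) (e : nat -> int) : uniq S ->
  (forall s, s \in S -> exists2 p, p \in P & exists b, s = (p ^ b.+1)%N) ->
  (forall s, s \in S -> (`|e s| < pdiv s)%N) ->
  exists g, exists2 C,
    [/\ forall p, p \in P -> (0 < g p)%N -> (p ^ g p)%N \in S,
       coprimez (pfrac_den g) C &
       has (fun s => e s != 0) S -> has (fun p => 0 < g p)%N P] &
    \sum_(s <- S) (e s)%:~R / s%:R = C%:~R / (pfrac_den g)%:R :> R.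
Proof.
elim: S => [|s S IHS] /= => [_ _ _ | /andP[sS S_uniq] S_pp e_lt].
  exists (fun=> 0%N), 0; last by rewrite big_nil mul0r.
  by split=> //; rewrite /pfrac_den big1_seq.
have S_sub : {subset S <= s :: S} by move=> t tS; rewrite inE tS orbT.
have [g [C [g_in_S gC g_pos] sum_S]] := IHS S_uniq
  (fun t tS => S_pp t (S_sub t tS)) (fun t tS => e_lt t (S_sub t tS)).
have [p pP [b s_def]] := S_pp s (mem_head _ _).
have p_pr : prime p := allP P_prime p pP.
have [es0|es_neq0] := eqVneq (e s) 0.
  exists g, C; last by rewrite big_cons es0 mul0r add0r.
  split=> [q qP /(g_in_S q qP)/S_sub //|//|].
  exact: g_pos.
have b_neq : b.+1 != g p.
  by apply: contraNneq sS => gp; rewrite s_def gp g_in_S // -gp.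
have p_es : coprimez p (e s).
  rewrite coprimez_prime // dvdzE /=; apply: contraL (e_lt s (mem_head _ _)).
  have -> : pdiv s = p by rewrite s_def pdiv_pfactor.
  by move=> p_dvd; rewrite -leqNgt; apply: dvdn_leq p_dvd; rewrite absz_gt0.
have [C' gC' sum_sS] := pfrac_add pP b_neq p_es gC.
exists (raise_exp g p b.+1), C'; last by rewrite big_cons sum_S addrC -sum_sS s_def.
split=> // [q qP|_]; last first.
  by apply/hasP; exists p; rewrite // /raise_exp eqxx leq_max ltn0Sn orbT.
rewrite /raise_exp inE; case: eqP => [->|_ /(g_in_S q qP) ->]; last exact: orbT.
case: (leqP b.+1 (g p)) => [_ /(g_in_S p pP)->|_ _]; first exact: orbT.
by rewrite s_def eqxx.
Qed.
End PrimePowerFractions.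

Fixpoint digit_seqs (S : seq nat) : seq (seq nat) :=
  if S is s :: S' then [seq i :: l | i <- iota 0 (pdiv s), l <- digit_seqs S']
  else [:: [::]].

Definition digit_fun (S l : seq nat) s := nth 0%N l (index s S).

Lemma size_digit_seqs S : size (digit_seqs S) = (\prod_(s <- S) pdiv s)%N.
Proof.
elim: S => [|s S IHS] /=; first by rewrite big_nil.
by rewrite size_allpairs size_iota IHS big_cons.
Qed.

Lemma uniq_digit_seqs S : uniq (digit_seqs S).
Proof.
elim: S => [|s S IHS] //=; rewrite allpairs_uniq ?iota_uniq //.
by move=> [i l] [i' l'] _ _ [-> ->].
Qed.

Lemma mem_digit_seqs S l :
  (l \in digit_seqs S) = all2 (fun d s => d < pdiv s)%N l S.
Proof.
elim: S l => [|s S IHS] [|d l] //=.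
  by apply/negP => /allpairsP [[? ?] [_ _]].
apply/allpairsP/andP => [[[i l'] [/= i_lt l'S [-> ->]]]|[d_lt lS]].
  by rewrite mem_iota in i_lt; rewrite -IHS.
by exists (d, l); rewrite /= mem_iota IHS.
Qed.

Lemma digit_fun_lt S l s : l \in digit_seqs S -> s \in S ->
  (digit_fun S l s < pdiv s)%N.
Proof.
rewrite mem_digit_seqs /digit_fun; elim: S l => [|t S IHS] [|d l] //=.
case/andP=> d_lt lS; rewrite inE eq_sym; case: eqP => [<- //|_ /= sS].
exact: IHS.
Qed.

Lemma digit_fun_inj S l l' : uniq S ->
  l \in digit_seqs S -> l' \in digit_seqs S ->
  {in S, digit_fun S l =1 digit_fun S l'} -> l = l'.
Proof.
have size_digits m : m \in digit_seqs S -> size m = size S.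
  by rewrite mem_digit_seqs; elim: S m => [|t S IHS] [|d m] //= /andP[_ /IHS->].
move=> S_uniq lS l'S eq_ll'; apply: (@eq_from_nth _ 0%N) => [|i].
  by rewrite !size_digits.
rewrite size_digits // => i_lt; have := eq_ll' _ (mem_nth 0%N i_lt).
by rewrite /digit_fun index_uniq.
Qed.

Lemma map_digit_seqs S k : (forall s, s \in S -> k s < pdiv s)%N ->
  map k S \in digit_seqs S.
Proof.
rewrite mem_digit_seqs; elim: S => [|s S IHS] //= k_lt.
by rewrite k_lt ?mem_head // IHS // => t tS; rewrite k_lt // inE tS orbT.
Qed.

Lemma digit_fun_map S k s : s \in S -> digit_fun S (map k S) s = k s.
Proof. by move=> sS; rewrite /digit_fun (nth_map 0%N) ?index_mem // nth_index. Qed.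

Lemma prime_powerP s : prime_power s ->
  exists2 p, prime p & exists b, s = (p ^ b.+1)%N.
Proof. by case=> p [[|b] [p_pr // _ ->]]; exists p => //; exists b. Qed.

Definition digit_sum (R : numFieldType) (S : seq nat) (k : nat -> nat) : R :=
  \sum_(s <- S) (k s)%:R / s%:R.

Lemma digit_sum_sub_reduced (R : numFieldType) S (k k' : nat -> nat) :
  uniq S -> (forall s, s \in S -> prime_power s) ->
  (forall s, s \in S -> k s < pdiv s)%N -> (forall s, s \in S -> k' s < pdiv s)%N ->
  has (fun s => k s != k' s) S ->
  exists T, exists C,
    [/\ {subset T <= S}, uniq [seq pdiv t | t <- T],
        (1 < \prod_(t <- T) t)%N, coprimez (\prod_(t <- T) t)%N C &
        digit_sum R S k - digit_sum R S k' = C%:~R / (\prod_(t <- T) t)%:R].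
Proof.
move=> S_uniq S_pp k_lt k'_lt k_neq.
pose P := undup [seq pdiv s | s <- S].
have P_uniq : uniq P := undup_uniq _.
have P_prime : all prime P.
  apply/allP => p; rewrite mem_undup => /mapP[s /S_pp/prime_powerP[q q_pr [b ->]] ->].
  by rewrite pdiv_pfactor.
have S_P s : s \in S -> exists2 p, p \in P & exists b, s = (p ^ b.+1)%N.
  move=> sS; have /prime_powerP[p p_pr [b s_def]] := S_pp s sS.
  exists p => //; last by exists b.
  by rewrite mem_undup; apply/mapP; exists s; rewrite // s_def pdiv_pfactor.
pose e s := (k s)%:Z - (k' s)%:Z.
have e_lt s : s \in S -> (`|e s| < pdiv s)%N.
  by move=> sS; move: (k_lt s sS) (k'_lt s sS); rewrite /e; lia.
have [g [C [g_in_S gC g_pos] sum_e]] := pfrac_sum R P_uniq P_prime S_uniq S_P e_lt.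
have /hasP[p pP gp_gt0] : has (fun p => 0 < g p)%N P.
  apply: g_pos; apply: sub_has k_neq => s; rewrite /e subr_eq0.
  by apply: contra => /eqP[->].
pose T := [seq p ^ g p | p <- P & 0 < g p]%N.
have prod_T : (\prod_(t <- T) t)%N = pfrac_den P g.
  rewrite big_map big_filter big_mkcond; apply: eq_bigr => q _.
  by case: ifP => // /negbT; rewrite -eqn0Ngt => /eqP ->.
exists T, C; rewrite prod_T; split => //.
- by move=> t /mapP[q]; rewrite mem_filter => /andP[gq qP] ->; apply: g_in_S.
- suff -> : [seq pdiv t | t <- T] = [seq q <- P | 0 < g q]%N.
    exact: filter_uniq.
  rewrite -map_comp -[RHS]map_id; apply/eq_in_map => q.
  rewrite mem_filter => /andP[gq qP] /=.
  by rewrite -(prednK gq) pdiv_pfactor //; apply: (allP P_prime).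
- exact (pfrac_den_gt1 P_uniq P_prime pP gp_gt0).
rewrite -sum_e /digit_sum -sumrB; apply: eq_bigr => s _.
by rewrite /e intrB mulrBl.
Qed.

Lemma digit_sum_inj (R : numFieldType) S (k k' : nat -> nat) :
  uniq S -> (forall s, s \in S -> prime_power s) ->
  (forall s, s \in S -> k s < pdiv s)%N -> (forall s, s \in S -> k' s < pdiv s)%N ->
  digit_sum R S k = digit_sum R S k' -> {in S, k =1 k'}.
Proof.
move=> S_uniq S_pp k_lt k'_lt eq_sum.
suff /hasPn eq_kk' : ~~ has (fun s => k s != k' s) S by move=> s /eq_kk' /negPn /eqP.
apply/negP => /(digit_sum_sub_reduced R S_uniq S_pp k_lt k'_lt) [T [C [_ _ T_gt1 TC]]].
have C_neq0 : C != 0.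
  by apply: contraTneq TC => ->; rewrite coprimezE /coprime gcdn0 gtn_eqF.
rewrite eq_sum subrr => /esym/eqP; apply/negP.
by rewrite mulf_neq0 ?invr_eq0 ?intr_eq0 // pnatr_eq0 -lt0n ltnW.
Qed.

Lemma digit_sumsP (R : realType) S (b : R) :
  b \in [seq digit_sum R S (digit_fun S l) | l <- digit_seqs S] <-> inB S b.
Proof.
split => [/mapP[l lS ->]|[k [k_lt ->]]].
  by exists (digit_fun S l); split => // s; apply: digit_fun_lt.
apply/mapP; exists (map k S); first exact: map_digit_seqs.
by apply: eq_big_seq => s sS; rewrite digit_fun_map.
Qed.

Lemma polyA_at1 A : (polyA A).[1] = (size A)%:Z.
Proof.
rewrite /polyA horner_sum (eq_bigr (fun=> 1)) => [|a _]; last by rewrite hornerXn expr1n.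
by rewrite -sum1_size -natz natr_sum.
Qed.

Lemma Cyclotomic_prime_power_at1 s : prime_power s -> ('Phi_s).[1] = (pdiv s)%:Z.
Proof. by case/prime_powerP=> p p_pr [b ->]; rewrite Cyclotomic_pfactor_at1 ?pdiv_pfactor. Qed.

Theorem mainTheorem2 (R : realType) (A : seq nat) (SA : seq nat) :
  uniq A -> (0 \in A)%N -> (2 <= size A)%N ->
  (* SA enumerates (without repetition) the set S_A *)
  uniq SA ->
  (forall s : nat, s \in SA <-> (prime_power s /\ 'Phi_s %| polyA A)) ->
  (* (T1) *)
  (polyA A).[1] = \prod_(s <- SA) ('Phi_s).[1] ->
  (* (T2) *)
  (forall T : seq nat, T != [::] -> {subset T <= SA} ->
     uniq [seq pdiv s | s <- T] -> 'Phi_(\prod_(s <- T) s)%N %| polyA A) ->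
  (exists Bs : seq R, [/\ uniq Bs, size Bs = size A &
                          forall b : R, b \in Bs <-> inB SA b]) /\
  (forall b b' : R, inB SA b -> inB SA b' -> b != b' ->
     (map_poly (intr : int -> R[i]) (polyA A)).[expi (2 * pi * (b - b'))] = 0).
Proof.
move=> _ _ _ SA_uniq SA_def T1 T2.
have SA_pp s : s \in SA -> prime_power s by case/SA_def.
split.
  exists [seq digit_sum R SA (digit_fun SA l) | l <- digit_seqs SA]; split.
  - rewrite map_inj_in_uniq ?uniq_digit_seqs // => l l' lS l'S eq_sum.
    apply: (digit_fun_inj SA_uniq lS l'S).
    by apply: digit_sum_inj eq_sum => // s; apply: digit_fun_lt.
  - apply/eqP; rewrite size_map size_digit_seqs -eqz_nat -polyA_at1 T1.
    rewrite -natz natr_prod; apply/eqP/esym/eq_big_seq => s.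
    by move/SA_pp/Cyclotomic_prime_power_at1 ->; rewrite natz.
  - exact: digit_sumsP.
move=> b b' [k [k_lt b_def]] [k' [k'_lt b'_def]] b_neq.
have k_neq : has (fun s => k s != k' s) SA.
  apply: contraNT b_neq => /hasPn eq_kk'; rewrite b_def b'_def.
  by apply/eqP/eq_big_seq => s /eq_kk' /negPn /eqP ->.
have [T [C [T_SA T_uniq T_gt1 TC sub_eq]]] :=
  digit_sum_sub_reduced R SA_uniq SA_pp k_lt k'_lt k_neq.
have T_neq0 : T != [::] by apply: contraTneq T_gt1 => ->; rewrite big_nil.
have -> : b - b' = C%:~R / (\prod_(t <- T) t)%:R by rewrite b_def b'_def; exact: sub_eq.
have /(Pdiv.IdomainMonic.dvdpP (Cyclotomic_monic _)) [q ->] := T2 T T_neq0 T_SA T_uniq.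
have prim := expi_2pi_prim_root R (ltnW T_gt1) TC.
by rewrite rmorphM hornerM (rootP (root_map_Cyclotomic prim)) mulr0.
Qed.
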